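(* For each $\sigma\in\{\underline{21}3,\ \underline{31}2,\ 2\underline{13},\ 2\underline{31},\ 3\underline{12}\}$, the set $\mathrm{Sort}(\mathrm{SC}_\sigma)$ is not a permutation class.
   Context: $\mathfrak S_n$ is the set of permutations of $\{1,\dots,n\}$. A permutation $\pi$ contains a (classical) permutation $\tau$ if some subsequence of $\pi$ has the same relative order as $\tau$. A permutation class is a set $\Pi$ of permutations such that every permutation contained in some $\pi\in\Pi$ is also in $\Pi$. A vincular pattern is a permutation with some entries underlined; a sequence contains it if it has a subsequence with the same relative order in which entries corresponding to adjacent underlined entries occupy consecutive positions (e.g. an occurrence of $\underline{21}3$ is $a_ja_{j+1}a_l$ with $l>j+1$ and $a_{j+1}<a_j<a_l$; an occurrence of $2\underline{13}$ is $a_ia_ja_{j+1}$ with $i<j$ and $a_j<a_i<a_{j+1}$). For a pattern $\sigma$, the map $\mathrm{SC}_\sigma$ acts on $\tau$: read entries left to right; when the next entry $x$ is read, if pushing $x$ yields a stack whose entries read top to bottom (stack adjacency = consecutive positions) avoid $\sigma$, push $x$; otherwise pop the top stack entry to the output and repeat. At the end pop all remaining entries; the output is $\mathrm{SC}_\sigma(\tau)$. West's stack-sorting map is $s=\mathrm{SC}_{21}$. $\mathrm{Sort}_n(\mathrm{SC}_\sigma)=\{\tau\in\mathfrak S_n : s(\mathrm{SC}_\sigma(\tau))=12\cdots n\}$ and $\mathrm{Sort}(\mathrm{SC}_\sigma)=\bigcup_{n\ge1}\mathrm{Sort}_n(\mathrm{SC}_\sigma)$. *)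

From mathcomp Require Import all_boot.
Set Implicit Arguments. Unset Strict Implicit. Unset Printing Implicit Defensive.

Fixpoint subseqs (T : Type) (s : seq T) : seq (seq T) :=
  match s with
  | [::] => [:: [::]]
  | x :: s' => let r := subseqs s' in [seq x :: t | t <- r] ++ r
  end.

(* A vincular pattern is given by a permutation [p] (a sequence of 1..k)
   and a list [adj] of indices i (0-based) such that entries i and i+1 of
   the pattern are underlined together, i.e. must occupy consecutive
   positions. A classical pattern has [adj = [::]].
   [vcontains p adj s]: the sequence s (of distinct entries) contains the
   vincular pattern (p, adj). *)
Definition vcontains (p adj s : seq nat) : bool :=
  has (fun I =>
         [&& size I == size p,
             all (fun i => nth 0 I i.+1 == (nth 0 I i).+1) adj &
             all (fun ij =>
                    (nth 0 s (nth 0 I ij.1) < nth 0 s (nth 0 I ij.2))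
                    == (nth 0 p ij.1 < nth 0 p ij.2))
                 [seq (i, j) | i <- iota 0 (size p), j <- iota 0 (size p)]])
      (subseqs (iota 0 (size s))).

Definition is_perm (s : seq nat) : bool :=
  (0 < size s) && perm_eq s (iota 1 (size s)).

Definition contains (pi tau : seq nat) : bool := vcontains tau [::] pi.

(* The stack is a list whose head is the top; read top to bottom it is the
   list itself.  [out] is the output produced so far (in order).
   Each step pushes an input entry or pops the stack, so 2*n+1 steps of fuel
   suffice for an input of length n. *)
Fixpoint sc_aux (p adj : seq nat) (fuel : nat) (inp stack out : seq nat)
  : seq nat :=
  match fuel with
  | 0 => out ++ stack
  | f.+1 =>
    match inp with
    | [::] => out ++ stack   (* pop all remaining entries, top first *)
    | x :: rest =>
      if ~~ vcontains p adj (x :: stack) then sc_aux p adj f rest (x :: stack) out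
      else match stack with
           | y :: st => sc_aux p adj f inp st (rcons out y)
           | [::] => sc_aux p adj f rest [:: x] out (* unreachable for |p| >= 2 *)
           end
    end
  end.

Definition SC (p adj tau : seq nat) : seq nat :=
  sc_aux p adj (size tau).*2.+1 tau [::] [::].

Definition west_sort (tau : seq nat) : seq nat := SC [:: 2; 1] [::] tau.

Definition Sort (p adj : seq nat) : pred (seq nat) :=
  fun tau => is_perm tau && (west_sort (SC p adj tau) == iota 1 (size tau)).

Definition perm_class (P : pred (seq nat)) : Prop :=
  (forall pi, P pi -> is_perm pi) /\
  (forall pi tau, P pi -> is_perm tau -> contains pi tau -> P tau).

From mathcomp Require Import all_boot.

(* Each machine SC_sigma maps 132 (or 1324 for sigma = 2_31) to a permutation
   containing 231, which West's stack-sorting map cannot sort; yet 132 (resp.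
   1324) is contained in a permutation that SC_sigma followed by s does sort:
   4132 or 3142 (resp. 361425).  So Sort(SC_sigma) is not closed downwards. *)

Definition closure_failure (P : pred (seq nat)) (pi tau : seq nat) : bool :=
  [&& P pi, is_perm tau, contains pi tau & ~~ P tau].

Lemma closure_failure_not_perm_class (P : pred (seq nat)) (pi tau : seq nat) :
  closure_failure P pi tau -> ~ perm_class P.
Proof.
case/and4P=> Ppi perm_tau pi_tau /negP notPtau [_ closedP].
exact/notPtau/(closedP pi).
Qed.

Theorem mainTheorem20 :
  forall (p adj : seq nat),
    (p, adj) \in [:: ([:: 2; 1; 3], [:: 0]); ([:: 3; 1; 2], [:: 0]);
                    ([:: 2; 1; 3], [:: 1]); ([:: 2; 3; 1], [:: 1]);
                    ([:: 3; 1; 2], [:: 1])] ->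
    ~ perm_class (Sort p adj).
Proof.
move=> p adj; rewrite !inE => /or4P[| | |/orP[]] /eqP[-> ->];
  [ apply: (@closure_failure_not_perm_class _ [:: 4; 1; 3; 2] [:: 1; 3; 2])
  | apply: (@closure_failure_not_perm_class _ [:: 3; 1; 4; 2] [:: 1; 3; 2])
  | apply: (@closure_failure_not_perm_class _ [:: 3; 1; 4; 2] [:: 1; 3; 2])
  | apply: (@closure_failure_not_perm_class _ [:: 3; 6; 1; 4; 2; 5] [:: 1; 3; 2; 4])
  | apply: (@closure_failure_not_perm_class _ [:: 3; 1; 4; 2] [:: 1; 3; 2]) ];
  by vm_compute.
Qed.
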